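(* Let $(X,\|\cdot\|)$ be a convex normed space and let $\{v_n\}_{n\in\mathbb{N}}\subset X$ be a sequence such that $\lim_{n\to\infty}\frac{v_n}{n}$ exists in $X$ and is not $0$. Then there exists $N_0$ such that $v_n\ne 0$ for $n>N_0$ and $\left\{\frac{v_n}{\|v_n\|}\right\}_{n>N_0}$ is a uniformly convex subset of $X$. Moreover, if $v_n\neq0$ for all $n\in\mathbb{N}$, then $\left\{\frac{v_n}{\|v_n\|}\right\}_{n\in\mathbb{N}}$ is a uniformly convex subset of $X$.
   Context: $\mathbb{N}=\{1,2,3,\dots\}$. A normed space $X$ is convex if for all $u,v\in X$ with $u\ne v$ and $\|u\|=\|v\|=1$ we have $\|u+v\|<2$. A subset $S\subset X$ is called uniformly convex if for every $\varepsilon>0$ there exists $\delta\in(0,1)$ such that for all $u,v\in S$ with $\|u\|=\|v\|=1$ and $\|u-v\|\ge\varepsilon$ we have $\|u+v\|\le 2-\delta$. *)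

From HB Require Import structures.
From mathcomp Require Import all_boot all_order all_algebra.
From mathcomp Require Import all_classical all_reals all_analysis.
Set Implicit Arguments. Unset Strict Implicit. Unset Printing Implicit Defensive.
Import Order.TTheory GRing.Theory Num.Theory.
Import numFieldNormedType.Exports.
Local Open Scope classical_set_scope.
Local Open Scope ring_scope.

Definition convex_normed_space (R : realType) (X : normedModType R) : Prop :=
  forall u v : X, u != v -> `|u| = 1 -> `|v| = 1 -> `|u + v| < 2.

Definition uniformly_convex_set (R : realType) (X : normedModType R)
  (S : set X) : Prop :=
  forall eps : R, 0 < eps ->
    exists delta : R, 0 < delta < 1 /\
      forall u v : X, S u -> S v -> `|u| = 1 -> `|v| = 1 ->
        eps <= `|u - v| -> `|u + v| <= 2 - delta.

From HB Require Import structures.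
From mathcomp Require Import all_boot all_order all_algebra.
From mathcomp Require Import all_classical all_reals all_analysis.
From mathcomp Require Import lra.
Import Order.TTheory GRing.Theory Num.Theory.
Import numFieldNormedType.Exports.
Local Open Scope classical_set_scope.
Local Open Scope ring_scope.
Set Implicit Arguments. Unset Strict Implicit. Unset Printing Implicit Defensive.

(* Normalize: u_n = v_n / |v_n| converges to the unit vector w = L / |L|.  Two distinct unit vectors x, y have the gap 2 - |x + y| > 0 by strict
   convexity; a fixed u_i keeps a positive gap against the whole tail u_j, since
   |u_i + u_j| <= |u_i + w| + |w - u_j| (or, if u_i = w, the tail is eps-close to
   it); and two late terms are eps-close to each other.  Only finitely many
   positive gaps remain, and their minimum is positive: this finite bookkeeping
   is done by stating every gap as "for all d near 0^+" and intersecting filter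
   sets. *)

Lemma near_forall_ltn (T : Type) (F : set_system T) (P : nat -> T -> Prop) (K : nat) :
  Filter F -> (forall j, (j < K)%N -> \forall d \near F, P j d) ->
  \forall d \near F, forall j, (j < K)%N -> P j d.
Proof.
move=> FF PF; have /filter_forall : forall j : 'I_K, \forall d \near F, P j d.
  by move=> j; exact: PF.
by apply: filterS => d Pd j jK; exact: (Pd (Ordinal jK)).
Qed.

Section ConvexityGap.
Variables (R : realType) (X : normedModType R).

Definition convexity_gap (eps d : R) (x y : X) : Prop :=
  eps <= `|x - y| -> `|x + y| <= 2 - d.

Lemma convexity_gapC (eps d : R) (x y : X) :
  convexity_gap eps d x y -> convexity_gap eps d y x.
Proof. by rewrite /convexity_gap (distrC y) (addrC y). Qed.

Lemma convexity_gap_close (eps d : R) (x y : X) :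
  `|x - y| < eps -> convexity_gap eps d x y.
Proof. by move=> xy xy_ge; have := lt_le_trans xy xy_ge; rewrite ltxx. Qed.

Lemma uniformly_convex_set_near (S : set X) :
  (forall eps, 0 < eps ->
    \forall d \near 0^'+, forall x y, S x -> S y -> convexity_gap eps d x y) ->
  uniformly_convex_set S.
Proof.
move=> Sgap eps eps_gt0; near (0 : R)^'+ => d.
have Sd : forall x y, S x -> S y -> convexity_gap eps d x y by near: d; exact: Sgap.
exists d; split=> [|x y Sx Sy _ _]; last exact: Sd.
by apply/andP; split; near: d; [exact: nbhs_right_gt | exact: nbhs_right_lt].
Unshelve. all: by end_near.
Qed.
End ConvexityGap.

Section ConvergentUnitSequence.
Variables (R : realType) (X : normedModType R).
Hypothesis cvx : convex_normed_space X.
Variables (u : nat -> X) (w : X) (A : set nat).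
Hypotheses (w1 : `|w| = 1) (u_cvg : u @ \oo --> w).
Hypothesis uA1 : forall n, A n -> `|u n| = 1.
Variables (eps : R) (eps_gt0 : 0 < eps).

Lemma near_convexity_gap_unit (x y : X) : `|x| = 1 -> `|y| = 1 ->
  \forall d \near 0^'+, convexity_gap eps d x y.
Proof.
move=> x1 y1; have [->|xy] := eqVneq x y.
  by apply: nearW => d; apply: convexity_gap_close; rewrite subrr normr0.
have : 0 < 2 - `|x + y| by rewrite subr_gt0 cvx.
by move/nbhs_right_lt; apply: filterS => d d_lt _; lra.
Qed.

Lemma near_convexity_gap_tail (x : X) : `|x| = 1 ->
  exists K, \forall d \near 0^'+, forall j, (K <= j)%N -> convexity_gap eps d x (u j).
Proof.
move=> x1; have /cvgrPdist_lt u_near := u_cvg.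
have [->|xw] := eqVneq x w.
  have [K _ Kw] := u_near eps eps_gt0.
  by exists K; apply: nearW => d j /Kw; exact: convexity_gap_close.
have c_gt0 : 0 < (2 - `|x + w|) / 2 by rewrite divr_gt0 // subr_gt0 cvx.
have [K _ Kw] := u_near _ c_gt0; exists K.
apply: filterS (nbhs_right_lt c_gt0) => d d_lt j /Kw wu _.
have : `|x + u j| <= `|x + w| + `|w - u j|.
  have -> : x + u j = (x + w) + (u j - w) by rewrite addrA addrAC addrK.
  by rewrite (distrC w) ler_normD.
lra.
Qed.

Lemma near_convexity_gap_row i : A i ->
  \forall d \near 0^'+, forall j, A j -> convexity_gap eps d (u i) (u j).
Proof.
move=> Ai; have [K tail] := near_convexity_gap_tail (uA1 Ai).
have head : \forall d \near 0^'+,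
    forall j, (j < K)%N -> A j -> convexity_gap eps d (u i) (u j).
  apply: near_forall_ltn => j _; have [Aj|nAj] := pselect (A j).
    by apply: filterS (near_convexity_gap_unit (uA1 Ai) (uA1 Aj)).
  by apply: nearW => d /nAj.
apply: filterS2 head tail => d head tail j Aj.
by have [jK|Kj] := ltnP j K; [exact: head | exact: tail].
Qed.

Lemma near_convexity_gap :
  \forall d \near 0^'+, forall i j, A i -> A j -> convexity_gap eps d (u i) (u j).
Proof.
have half_eps_gt0 : 0 < eps / 2 by rewrite divr_gt0.
have /cvgrPdist_lt/(_ _ half_eps_gt0) [K _ Kw] := u_cvg.
have head : \forall d \near 0^'+,
    forall i, (i < K)%N -> forall j, A i -> A j -> convexity_gap eps d (u i) (u j).
  apply: near_forall_ltn => i _; have [Ai|nAi] := pselect (A i).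
    by apply: filterS (near_convexity_gap_row Ai) => d row j _; exact: row.
  by apply: nearW => d j /nAi.
apply: filterS head => d head i j Ai Aj.
have [iK|Ki] := ltnP i K; first exact: head.
have [jK|Kj] := ltnP j K; first exact/convexity_gapC/head.
apply: convexity_gap_close.
have := ler_distD w (u i) (u j); rewrite (distrC (u i) w).
by have := Kw i Ki; have := Kw j Kj; lra.
Qed.

End ConvergentUnitSequence.

Lemma uniformly_convex_cvg_unit (R : realType) (X : normedModType R)
    (u : nat -> X) (w : X) (A : set nat) :
  convex_normed_space X -> `|w| = 1 -> u @ \oo --> w ->
  (forall n, A n -> `|u n| = 1) -> uniformly_convex_set [set u n | n in A].
Proof.
move=> cvx w1 u_cvg uA1; apply: uniformly_convex_set_near => eps eps_gt0.
apply: filterS (near_convexity_gap cvx w1 u_cvg uA1 eps_gt0).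
by move=> d gap _ _ [i Ai <-] [j Aj <-]; exact: gap.
Qed.

Section Normalization.
Variables (R : realType) (X : normedModType R).

Lemma norm_normalized (x : X) : x != 0 -> `|(`|x|^-1 *: x)| = 1.
Proof. by move=> x0; rewrite normrZ normfV normr_id mulVf // normr_eq0. Qed.

Lemma normalizedZ (a : R) (x : X) : 0 < a ->
  `|a *: x|^-1 *: (a *: x) = `|x|^-1 *: x.
Proof.
move=> a_gt0; rewrite normrZ gtr0_norm // invfM scalerA mulrAC.
by rewrite mulVf ?mul1r // gt_eqF.
Qed.

Lemma cvg_normalized (T : Type) (F : set_system T) (f : T -> X) (l : X) :
  Filter F -> l != 0 -> f @ F --> l ->
  (fun t => `|f t|^-1 *: f t) @ F --> `|l|^-1 *: l.
Proof.
move=> FF l0 f_cvg; apply: cvgZ => //; apply: cvgV; first by rewrite normr_eq0.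
exact: cvg_norm.
Qed.

End Normalization.

Theorem mainTheorem8 (R : realType) (X : normedModType R) (v : nat -> X)
  (L : X) :
  convex_normed_space X ->
  (fun n : nat => (n%:R)^-1 *: v n) @ \oo --> L ->
  L != 0 ->
  (exists N0 : nat,
     (forall n : nat, (N0 < n)%N -> v n != 0) /\
     uniformly_convex_set
       [set (`|v n|)^-1 *: v n | n in [set n : nat | (N0 < n)%N]]) /\
  ((forall n : nat, (0 < n)%N -> v n != 0) ->
   uniformly_convex_set
     [set (`|v n|)^-1 *: v n | n in [set n : nat | (0 < n)%N]]).
Proof.
move=> cvx v_cvg L0.
have u_cvg : (fun n => `|v n|^-1 *: v n) @ \oo --> `|L|^-1 *: L.
  apply: cvg_trans (cvg_normalized _ L0 v_cvg); apply: near_eq_cvg.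
  by exists 1%N => // n /= n_gt0; rewrite normalizedZ // invr_gt0 ltr0n.
have uc (A : set nat) : (forall n, A n -> v n != 0) ->
    uniformly_convex_set [set `|v n|^-1 *: v n | n in A].
  move=> Av; apply: uniformly_convex_cvg_unit cvx _ u_cvg _.
    exact: norm_normalized.
  by move=> n /Av; exact: norm_normalized.
split=> [|v_neq0]; last exact: uc.
have [N _ Nv] := cvgr_neq0 L v_cvg L0.
have v_neq0 n : (N < n)%N -> v n != 0.
  by move/ltnW/Nv; apply: contraNneq => ->; rewrite scaler0.
by exists N; split=> //; exact: uc.
Qed.
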